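(* Let $k\geq 3$ be an integer and $\ell\geq 2$ an even integer, and let $G_1^{\{\ell,k\}}$ and $G_2^{\{\ell,k\}}$ be the indistinguishability graphs (for any fixed permutation $\sigma\neq\mathrm{id}$ of $[k]$). Then both $G_1^{\{\ell,k\}}$ and $G_2^{\{\ell,k\}}$ admit a proper $k$-coloring (hence are $k$-partially $k$-colorable), $\Delta_{E(G_1^{\{\ell,k\}})}=\Delta_{E(G_2^{\{\ell,k\}})}=k$, and every $k$-partial $k$-coloring of $G_1^{\{\ell,k\}}$ (resp. $G_2^{\{\ell,k\}}$) is a proper $k$-coloring of that graph.
   Context: Let $[m]=\{1,\dots,m\}$. A $k$-partial $c$-coloring of a graph $H=(V,E)$ is a map $\gamma:V\to\{1,\dots,c\}$ such that every vertex $v$ has at least $\min\{k,\deg_H(v)\}$ neighbors $u$ with $\gamma(u)\neq\gamma(v)$. For a graph $H$ with at least one edge, $\Delta_{E(H)}=\max_{\{u,v\}\in E(H)}\min\{\deg_H(u),\deg_H(v)\}$. Path of cliques: for permutations $\tau_1,\dots,\tau_{\ell-1}$ of $[k]$, $P(\tau_1,\dots,\tau_{\ell-1})$ has vertex set $[k]\times[\ell]$ and edges $\{(a,i),(b,i)\}$ for $a\neq b$, $i\in[\ell]$, and $\{(a,i),(b,i+1)\}$ for $i\in[\ell-1]$, $a,b\in[k]$, $b\neq\tau_i(a)$. The $k$-edge-gadget transformation: given a graph $G$ and for each edge a chosen ordered pair $(u,v)$, keep all vertices of $G$, delete each edge $\{u,v\}$, and add $k$ new vertices $(u,v,1),\dots,(u,v,k)$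 forming a clique together with edges $\{u,(u,v,j)\}$ for $j=1,\dots,k-1$ and $\{v,(u,v,k)\}$. Indistinguishability graphs: let $G_1=P(\tau_1,\dots,\tau_{\ell-1})$ with all $\tau_i=\mathrm{id}$, and $G_2=P(\tau_1',\dots,\tau_{\ell-1}')$ with $\tau_i'=\mathrm{id}$ for $i\neq \ell/2$ and $\tau'_{\ell/2}=\sigma$, where $\sigma$ is a fixed permutation of $[k]$ different from the identity. $G_1^{\{\ell,k\}}$ (resp. $G_2^{\{\ell,k\}}$) is obtained from $G_1$ (resp. $G_2$) by the $k$-edge-gadget transformation, where an edge $\{(a,i),(b,i)\}$ with $a<b$ is oriented as $((a,i),(b,i))$ and an edge $\{(a,i),(b,i+1)\}$ is oriented as $((a,i),(b,i+1))$. *)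

From mathcomp Require Import all_boot all_fingroup.
Set Implicit Arguments. Unset Strict Implicit. Unset Printing Implicit Defensive.

(* Graphs are relations e : rel T on a finType T (intended symmetric,
   irreflexive). Indices are 0-based: [k] is 'I_k, colours are 'I_c. *)

Definition nbrs (T : finType) (e : rel T) (v : T) : {set T} := [set u | e v u].
Definition deg (T : finType) (e : rel T) (v : T) : nat := #|nbrs e v|.

Definition partial_coloring (T : finType) (k c : nat) (e : rel T)
  (g : T -> 'I_c) : Prop :=
  forall v, minn k (deg e v) <= #|[set u | e v u & g u != g v]|.

Definition proper_coloring (T : finType) (c : nat) (e : rel T)
  (g : T -> 'I_c) : Prop :=
  forall u v, e u v -> g u != g v.

Definition DeltaE (T : finType) (e : rel T) : nat :=
  \max_(p : T * T | e p.1 p.2) minn (deg e p.1) (deg e p.2).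

(* Path of cliques P(tau_1,...,tau_{l-1}) on 'I_k * 'I_l, 0-based:
   tau i joins layer i and layer i+1. *)
Definition poc_rel (k l : nat) (tau : nat -> {perm 'I_k}) : rel ('I_k * 'I_l) :=
  fun x y =>
    [|| ((x.2 : nat) == y.2) && (x.1 != y.1),
        ((y.2 : nat) == x.2.+1) && (y.1 != tau x.2 x.1) |
        ((x.2 : nat) == y.2.+1) && (x.1 != tau y.2 y.1)].

Definition poc_orient (k l : nat) (tau : nat -> {perm 'I_k}) : rel ('I_k * 'I_l) :=
  fun x y => poc_rel tau x y &&
    ((((x.2 : nat) == y.2) && (x.1 < y.1)) || ((y.2 : nat) == x.2.+1)).

(* k-edge-gadget transformation, given the orientation o (o u v holds iff
   {u,v} is an edge of G chosen with ordered pair (u,v)).  Vertex (u,v,j) of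
   the paper (j in 1..k) is inr (u,v,j-1). *)
Definition gadget_vertex (k : nat) (V : finType) (o : rel V) : finType :=
  (V + {t : V * V * 'I_k | o t.1.1 t.1.2})%type.

Definition gadget_rel (k : nat) (V : finType) (o : rel V) : rel (gadget_vertex k o) :=
  fun x y =>
    match x, y with
    | inl _, inl _ => false
    | inr s, inr t => ((val s).1 == (val t).1) && ((val s).2 != (val t).2)
    | inl w, inr t | inr t, inl w =>
        let: (u, v, j) := val t in
        ((w == u) && ((j : nat) < k.-1)) || ((w == v) && ((j : nat) == k.-1))
    end.

Definition tau_id (k : nat) : nat -> {perm 'I_k} := fun _ => 1%g.
(* tau'_{l/2} = sigma (1-based), i.e. 0-based index l/2 - 1 *)
Definition tau_sigma (k l : nat) (sigma : {perm 'I_k}) : nat -> {perm 'I_k} :=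
  fun i => if i == l./2.-1 then sigma else 1%g.

Definition G1_gadget (k l : nat) :=
  @gadget_rel k _ (@poc_orient k l (tau_id k)).
Definition G2_gadget (k l : nat) (sigma : {perm 'I_k}) :=
  @gadget_rel k _ (@poc_orient k l (tau_sigma l sigma)).
Arguments G1_gadget k l : clear implicits.
Arguments G2_gadget k l sigma : clear implicits.
Arguments partial_coloring T k c e g : clear implicits.
Arguments proper_coloring T c e g : clear implicits.

(* Every gadget vertex has exactly k neighbours, and every edge of the gadget
   graph has a gadget vertex as an endpoint; so a k-partial colouring must
   separate all edges, i.e. it is proper, and DeltaE equals k.  Any proper
   k-colouring of the base graph extends to the gadget graph; for the paths of
   cliques the first coordinate, composed with sigma^-1 beyond the twisted
   layer, is such a colouring. *)
From mathcomp Require Import all_boot all_fingroup zify.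

Set Implicit Arguments.
Unset Strict Implicit.
Unset Printing Implicit Defensive.

Lemma proper_coloring_partial (T : finType) (k c : nat) (e : rel T)
    (g : T -> 'I_c) :
  proper_coloring T c e g -> partial_coloring T k c e g.
Proof.
move=> gP v.
have -> : [set u | e v u & g u != g v] = nbrs e v.
  by apply/setP => u; rewrite !inE andb_idr // => /gP; rewrite eq_sym.
exact: geq_minr.
Qed.

Lemma partial_coloring_small_deg (T : finType) (k c : nat) (e : rel T)
    (g : T -> 'I_c) (v u : T) :
  partial_coloring T k c e g -> deg e v <= k -> e v u -> g u != g v.
Proof.
move=> gP deg_v evu.
have sub : [set u | e v u & g u != g v] \subset nbrs e v.
  by apply/subsetP => z; rewrite !inE => /andP [].
have : [set u | e v u & g u != g v] == nbrs e v.
  by rewrite eqEcard sub /= -/(deg e v) -{1}(minn_idPr deg_v) gP.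
by move/eqP/setP/(_ u); rewrite !inE evu.
Qed.

Section Gadget.
Variables (k : nat) (V : finType) (o : rel V).
Local Notation K := k.+1.
Local Notation gvertex := {t : V * V * 'I_K | o t.1.1 t.1.2}.
Local Notation e := (@gadget_rel K V o).

Lemma gadget_rel_sym x y : e x y = e y x.
Proof.
case: x => [w|s]; case: y => [w'|t] //=.
by rewrite eq_sym [_.2 == _]eq_sym.
Qed.

Definition gadget_mate (t : gvertex) (j : 'I_K) : gvertex :=
  exist (fun t : V * V * 'I_K => o t.1.1 t.1.2) ((val t).1, j) (valP t).

Definition gadget_anchor (t : gvertex) : V :=
  if (val t).2 < k then (val t).1.1 else (val t).1.2.

(* The j-th neighbour of t: its mate with index j, except that the index of t
   itself is taken by its unique neighbour in V. *)
Definition gadget_nbr (t : gvertex) (j : 'I_K) : gadget_vertex K o :=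
  if j == (val t).2 then inl (gadget_anchor t) else inr (gadget_mate t j).

Lemma gadget_nbr_inj t : injective (gadget_nbr t).
Proof.
move=> j1 j2; rewrite /gadget_nbr.
by case: eqP => [->|_]; case: eqP => [->|_] // [].
Qed.

Lemma nbrs_gadget t : nbrs e (inr t) = gadget_nbr t @: setT.
Proof.
apply/setP => x; rewrite inE /gadget_nbr /gadget_anchor.
case: t => [[[u v] j] ouv] /=; apply/idP/imsetP.
- case: x => [w | [[[u' v'] j'] ouv']] /=.
  + move=> ewt; exists j => //; rewrite eqxx; congr inl.
    case/orP: ewt => /andP [/eqP -> hj]; first by rewrite hj.
    by rewrite (eqP hj) ltnn.
  + case/andP => /eqP uv_eq hj; exists j' => //.
    rewrite eq_sym (negPf hj); congr inr; apply: val_inj => /=.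
    by rewrite uv_eq.
- case=> j' _ hx; rewrite {x}hx; case: ifP => [_ | hj] /=; last by rewrite eqxx eq_sym hj.
  case: ifP => lt_jk; first by rewrite eqxx.
  by have := ltn_ord j; rewrite ltnS leq_eqVlt lt_jk orbF => ->; rewrite eqxx orbT.
Qed.

Lemma deg_gadget t : deg e (inr t) = K.
Proof. by rewrite /deg nbrs_gadget card_imset ?cardsT ?card_ord //; apply: gadget_nbr_inj. Qed.

Lemma gadget_partial_coloring_proper g :
  partial_coloring _ K K e g -> proper_coloring _ K e g.
Proof.
move=> gP.
have sep t y : e (inr t) y -> g y != g (inr t).
  by apply: partial_coloring_small_deg gP _; rewrite deg_gadget.
move=> [w|s] y.
- by case: y => [//|t]; rewrite gadget_rel_sym => /sep.
- by move/sep; rewrite eq_sym.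
Qed.

(* The last vertex (u,v,k) gets colour c u, the spare colour ord_max is moved to
   index c u; the k neighbours of u in the clique thus avoid c u, and (u,v,k)
   avoids its neighbour v since c u != c v. *)
Definition gadget_coloring (c : V -> 'I_K) (x : gadget_vertex K o) : 'I_K :=
  match x with
  | inl w => c w
  | inr t => tperm (c (val t).1.1) ord_max (val t).2
  end.

Lemma gadget_coloring_proper (c : V -> 'I_K) :
  (forall u v, o u v -> c u != c v) ->
  proper_coloring _ K e (gadget_coloring c).
Proof.
move=> cP.
have mixed w t : e (inl w) (inr t) ->
    gadget_coloring c (inl w) != gadget_coloring c (inr t).
  case: t => [[[u v] j] ouv] /=.
  case/orP => /andP [/eqP -> hj].
    rewrite -{1}(tpermR (c u) ord_max) (inj_eq perm_inj).
    by apply: contraTneq hj => <-; rewrite ltnn.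
  have -> : j = ord_max by apply: val_inj; exact/eqP.
  by rewrite tpermR eq_sym cP.
case=> [w|s] [w'|t] //.
- exact: mixed.
- by rewrite gadget_rel_sym => /mixed; rewrite eq_sym.
- by case/andP => /eqP /= ->; rewrite (inj_eq perm_inj).
Qed.

Lemma DeltaE_gadget u v : 0 < k -> o u v -> DeltaE e = K.
Proof.
move=> k_gt0 ouv.
pose t := exist (fun t : V * V * 'I_K => o t.1.1 t.1.2) (u, v, ord0) ouv.
apply/eqP; rewrite eqn_leq; apply/andP; split.
  apply/bigmax_leqP => [[[w|s] y]] /=; last by rewrite deg_gadget geq_minl.
  by case: y => [//|t'] _; rewrite deg_gadget geq_minr.
have et : e (inr t) (inr (gadget_mate t ord_max)).
  by rewrite /= eqxx /=; apply: contraTneq k_gt0 => /(congr1 val) /= <-.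
have := @leq_bigmax_cond _ (fun p => e p.1 p.2)
  (fun p => minn (deg e p.1) (deg e p.2)) (_, _) et.
by rewrite /= !deg_gadget minnn.
Qed.

Lemma gadget_properties u v (c : V -> 'I_K) :
  0 < k -> o u v -> (forall u v, o u v -> c u != c v) ->
  (exists g, proper_coloring _ K e g) /\
  (exists g, partial_coloring _ K K e g) /\
  DeltaE e = K /\
  (forall g, partial_coloring _ K K e g -> proper_coloring _ K e g).
Proof.
move=> k_gt0 ouv cP; have gP := gadget_coloring_proper cP.
split; first by exists (gadget_coloring c).
split; first by exists (gadget_coloring c); apply: proper_coloring_partial.
split; first exact: DeltaE_gadget k_gt0 ouv.
exact: gadget_partial_coloring_proper.
Qed.

End Gadget.

Lemma poc_orientP k l tau (x y : 'I_k * 'I_l) : poc_orient tau x y ->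
  (((x.2 : nat) == y.2) && (x.1 != y.1)) ||
  (((y.2 : nat) == x.2.+1) && (y.1 != tau x.2 x.1)).
Proof.
case/andP => xy /orP [/andP [same_layer lt_xy] | next_layer].
  by rewrite same_layer -(inj_eq val_inj) /= ltn_eqF.
rewrite next_layer /=; move: xy; rewrite /poc_rel (eqP next_layer).
by rewrite (ltn_eqF (ltnSn _)) eqxx /=; case/orP => // /andP [/eqP]; lia.
Qed.

Lemma poc_orient_edge k l tau : 1 < k -> 0 < l ->
  exists u v, @poc_orient k l tau u v.
Proof.
move=> k_gt1 l_gt0.
by exists (Ordinal (ltnW k_gt1), Ordinal l_gt0), (Ordinal k_gt1, Ordinal l_gt0).
Qed.

Lemma poc_orient_id_proper k l (x y : 'I_k * 'I_l) :
  poc_orient (tau_id k) x y -> x.1 != y.1.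
Proof. by case/poc_orientP/orP => /andP [_]; rewrite // perm1 eq_sym. Qed.

Definition twisted_coloring k l (sigma : {perm 'I_k}) (x : 'I_k * 'I_l) : 'I_k :=
  if x.2 < l./2 then x.1 else (sigma^-1)%g x.1.

Lemma poc_orient_sigma_proper k l sigma (x y : 'I_k * 'I_l) : 2 <= l ->
  poc_orient (tau_sigma l sigma) x y ->
  twisted_coloring sigma x != twisted_coloring sigma y.
Proof.
move=> l_ge2; rewrite /twisted_coloring.
case/poc_orientP/orP => /andP [/eqP layer xy].
  by rewrite layer; case: ifP => _ //; rewrite (inj_eq perm_inj).
rewrite /tau_sigma layer in xy *.
have half_gt0 : 0 < l./2 by rewrite half_gt0.
have [twist | ] := eqVneq (x.2 : nat) l./2.-1.
  rewrite twist prednK // ltnn leqnn.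
  by apply: contraNneq xy => ->; rewrite twist eqxx permKV.
move=> not_twist; rewrite (negPf not_twist) perm1 in xy.
have -> : (x.2.+1 < l./2) = (x.2 < l./2).
  apply/idP/idP => [/ltnW //|]; rewrite -{1}[l./2]prednK // ltnS leq_eqVlt.
  by rewrite (negPf not_twist) -ltnS prednK.
by case: ifP => _; rewrite ?(inj_eq perm_inj) eq_sym.
Qed.

Theorem mainTheorem10 (k l : nat) (sigma : {perm 'I_k}) :
  3 <= k -> 2 <= l -> ~~ odd l -> sigma != 1%g ->
  ((exists g, proper_coloring _ k (G1_gadget k l) g) /\
   (exists g, partial_coloring _ k k (G1_gadget k l) g) /\
   DeltaE (G1_gadget k l) = k /\
   (forall g, partial_coloring _ k k (G1_gadget k l) g ->
              proper_coloring _ k (G1_gadget k l) g)) /\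
  ((exists g, proper_coloring _ k (G2_gadget k l sigma) g) /\
   (exists g, partial_coloring _ k k (G2_gadget k l sigma) g) /\
   DeltaE (G2_gadget k l sigma) = k /\
   (forall g, partial_coloring _ k k (G2_gadget k l sigma) g ->
              proper_coloring _ k (G2_gadget k l sigma) g)).
Proof.
case: k sigma => [//|k] sigma k_ge3 l_ge2 _ _.
have k_gt0 : 0 < k by lia.
have k_gt1 : 1 < k.+1 by lia.
have l_gt0 : 0 < l by lia.
split.
  have [u [v ouv]] := poc_orient_edge (tau_id k.+1) k_gt1 l_gt0.
  apply: (gadget_properties (c := fun x => x.1)) k_gt0 ouv _.
  by move=> x y /poc_orient_id_proper.
have [u [v ouv]] := poc_orient_edge (tau_sigma l sigma) k_gt1 l_gt0.
apply: (gadget_properties (c := twisted_coloring sigma)) k_gt0 ouv _.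
by move=> x y /(poc_orient_sigma_proper l_ge2).
Qed.
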